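(* Let $n\ge1$, $N\ge1$, $p\in(0,1)$, and let $I:\{0,1\}^n\to\{0,1\}$ be a decoding-error indicator with error-correcting capability $t$ ($0\le t<n$, $I(\mathbf z)=0$ whenever $wt(\mathbf z)\le t$). For $q\in(0,1)$ let $\hat P_{IS}(e)=\frac1N\sum_{j=1}^N I(\mathbf z_j)W(wt(\mathbf z_j);p,q)$ with $\mathbf z_j$ i.i.d. with pmf $q^{wt(\mathbf z)}(1-q)^{n-wt(\mathbf z)}$. Then for all $q\in(0,1)$, $$\frac{\partial}{\partial q}\mathrm{var}_q\big[\hat P_{IS}(e)\big]=-\frac1N\sum_{i=t+1}^{n}\frac{i-nq}{q(1-q)}\,W(i;p,q)\,P_p(e;i).$$
   Context: Setting: linear block code of length $n$ over a binary symmetric channel with cross-over probability $p$; all-zero codeword transmitted so the channel output is the error pattern $\mathbf z\in\{0,1\}^n$. $wt(\mathbf z)$ is the number of ones. $I(\mathbf z)=1$ iff $\mathbf z$ is erroneously decoded. $W(i;p,q)=\frac{p^i(1-p)^{n-i}}{q^i(1-q)^{n-i}}$. $P_p(e;i)=\sum_{\mathbf z:\,wt(\mathbf z)=i}I(\mathbf z)p^i(1-p)^{n-i}$. $\mathrm{var}_q$ is the variance when samples have pmf $q^{wt(\mathbf z)}(1-q)^{n-wt(\mathbf z)}$. *)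

From HB Require Import structures.
From mathcomp Require Import all_boot all_order all_algebra.
From mathcomp Require Import all_classical all_reals all_analysis.
Unset Printing Implicit Defensive.
Import Order.TTheory GRing.Theory Num.Theory.
Local Open Scope ring_scope.

Definition word (n : nat) := {ffun 'I_n -> bool}.

Definition wt {n : nat} (z : word n) : nat := #|[pred i | z i]|.

Definition W {R : realType} (n i : nat) (p q : R) : R :=
  (p ^+ i * (1 - p) ^+ (n - i)) / (q ^+ i * (1 - q) ^+ (n - i)).

Definition pmf_word {R : realType} {n : nat} (q : R) (z : word n) : R :=
  q ^+ wt z * (1 - q) ^+ (n - wt z).

Definition Ppe {R : realType} {n : nat} (I : word n -> bool) (p : R) (i : nat) : R :=
  \sum_(z : word n | wt z == i) (I z)%:R * (p ^+ i * (1 - p) ^+ (n - i)).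

Definition sample (N n : nat) := {ffun 'I_N -> word n}.

Definition pmf_sample {R : realType} {N n : nat} (q : R) (zs : sample N n) : R :=
  \prod_(j < N) pmf_word q (zs j).

Definition hatP {R : realType} (N : nat) {n : nat} (I : word n -> bool) (p q : R)
  (zs : sample N n) : R :=
  N%:R^-1 * \sum_(j < N) (I (zs j))%:R * W n (wt (zs j)) p q.

Definition var_IS {R : realType} (N : nat) {n : nat} (I : word n -> bool) (p q : R) : R :=
  \sum_(zs : sample N n) pmf_sample q zs * (hatP N I p q zs) ^+ 2
  - (\sum_(zs : sample N n) pmf_sample q zs * hatP N I p q zs) ^+ 2.

From HB Require Import structures.
From mathcomp Require Import all_boot all_order all_algebra.
From mathcomp Require Import all_classical all_reals all_analysis.
From mathcomp Require Import ring.
Import Order.TTheory GRing.Theory Num.Theory.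
Import numFieldNormedType.Exports.
Local Open Scope ring_scope.

(* Under [q] the sample mean of [N] i.i.d. copies of [a z = I z * W(wt z; p, q)]
   has variance [(E_q[a^2] - E_q[a]^2) / N].  Since [W] is the likelihood ratio
   [pmf_p / pmf_q], [E_q[a] = P_p(e)] does not depend on [q], while
   [E_q[a^2] = sum_i W(i; p, q) P_p(e; i)].  Hence only the weights [W(i; p, q)]
   are differentiated, with logarithmic derivative [-(i - nq) / (q (1 - q))],
   and the terms with [i <= t] vanish because [P_p(e; i) = 0] there. *)

Section Derivatives.
Context {R : realType}.

Lemma natr_exprpred_mul (x : R) k : k%:R * x ^+ k.-1 * x = k%:R * x ^+ k.
Proof. by case: k => [|k]; rewrite ?mul0r // -mulrA -exprSr. Qed.

Lemma is_derive_expr (x : R) k :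
  is_derive x 1 (fun y : R => y ^+ k) (k%:R * x ^+ k.-1).
Proof.
have -> : (fun y : R => y ^+ k) = id ^+ k by apply/funext => y; rewrite exprfctE.
have H := @is_deriveX R R id k x 1 1 (is_derive_id x 1).
apply: is_derive_eq H _.
by rewrite /GRing.scale /= mulr1.
Qed.

Lemma is_derive_expr_1m (x : R) k :
  is_derive x 1 (fun y : R => (1 - y) ^+ k) (- (k%:R * (1 - x) ^+ k.-1)).
Proof.
have -> : (fun y : R => (1 - y) ^+ k) = (cst 1 - id) ^+ k.
  by apply/funext => y; rewrite exprfctE.
have H1 : is_derive x 1 (cst 1 - id : R -> R) (0 - 1).
  exact: is_deriveB.
have H := @is_deriveX R R (cst 1 - id) k x 1 _ H1.
apply: is_derive_eq H _.
by rewrite /GRing.scale /= sub0r mulrN1.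
Qed.

(* The logarithmic derivative of [y^i (1-y)^k] is [i/y - k/(1-y)]. *)
Lemma is_derive_bernoulli_weight (x : R) i k : x != 0 -> 1 - x != 0 ->
  is_derive x 1 (fun y : R => y ^+ i * (1 - y) ^+ k)
    (x ^+ i * (1 - x) ^+ k * ((i%:R - (i + k)%:R * x) / (x * (1 - x)))).
Proof.
move=> x0 x1.
have H := is_deriveM (is_derive_expr x i) (is_derive_expr_1m x k).
apply: is_derive_eq H _; rewrite /GRing.scale /=.
apply: (mulIf (mulf_neq0 x0 x1)); rewrite -[RHS]mulrA divfK ?mulf_neq0 //.
have -> : (x ^+ i * - (k%:R * (1 - x) ^+ k.-1)
           + (1 - x) ^+ k * (i%:R * x ^+ i.-1)) * (x * (1 - x)) =
  - (x ^+ i * x * (k%:R * (1 - x) ^+ k.-1 * (1 - x)))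
  + (1 - x) ^+ k * (1 - x) * (i%:R * x ^+ i.-1 * x) by ring.
by rewrite !natr_exprpred_mul natrD; ring.
Qed.

Lemma is_derive_W n i (p x : R) : (i <= n)%N -> x != 0 -> 1 - x != 0 ->
  is_derive x 1 (W n i p) (- ((i%:R - n%:R * x) / (x * (1 - x))) * W n i p x).
Proof.
move=> le_in x0 x1.
set D := fun y : R => y ^+ i * (1 - y) ^+ (n - i).
have Dx0 : D x != 0 by rewrite mulf_neq0 // expf_neq0.
have -> : W n i p = (p ^+ i * (1 - p) ^+ (n - i)) \*: (fun y => (D y)^-1).
  by apply/funext => y; rewrite /W /= /GRing.scale.
have H := is_deriveZ (p ^+ i * (1 - p) ^+ (n - i))
  (is_deriveV Dx0 (is_derive_bernoulli_weight x i (n - i) x0 x1)).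
apply: is_derive_eq H _.
rewrite subnKC // /= -/(D x) /GRing.scale /=.
by field; rewrite Dx0 x0 x1.
Qed.

Lemma is_derive_sum_scaled {m} (c : 'I_m -> R) {g : 'I_m -> R -> R}
    {dg : 'I_m -> R} {x : R} :
  (forall i, is_derive x 1 (g i) (dg i)) ->
  is_derive x 1 (fun y => \sum_i c i * g i y) (\sum_i c i * dg i).
Proof.
move=> dgi; have H := is_derive_sum (fun i => is_deriveZ (c i) (dgi i)).
have -> : (fun y => \sum_i c i * g i y) = \sum_i c i \*: g i.
  by apply/funext => y; rewrite fct_sumE.
exact: H.
Qed.

End Derivatives.

Section IIDSample.
Context {R : numFieldType} {T : finType} (N : nat) {f : T -> R}.
Hypothesis f_sum1 : \sum_x f x = 1.

Definition iid_expect (F : {ffun 'I_N -> T} -> R) : R :=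
  \sum_(zs : {ffun 'I_N -> T}) \prod_j f (zs j) * F zs.

Lemma iid_expectZ c F : iid_expect (fun zs => c * F zs) = c * iid_expect F.
Proof.
by rewrite /iid_expect mulr_sumr; apply: eq_bigr => zs _; rewrite mulrCA.
Qed.

Lemma iid_expect_sum (F : 'I_N -> {ffun 'I_N -> T} -> R) :
  iid_expect (fun zs => \sum_k F k zs) = \sum_k iid_expect (F k).
Proof.
rewrite /iid_expect exchange_big /=.
by apply: eq_bigr => zs _; rewrite mulr_sumr.
Qed.

Lemma iid_expect_prod (g : 'I_N -> T -> R) :
  iid_expect (fun zs => \prod_j g j (zs j)) = \prod_j \sum_x f x * g j x.
Proof.
rewrite /iid_expect bigA_distr_bigA /=.
by apply: eq_bigr => zs _; rewrite big_split.
Qed.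

Variable a : T -> R.
Let M1 := \sum_x f x * a x.
Let M2 := \sum_x f x * a x ^+ 2.
Let coord (k j : 'I_N) : T -> R := if j == k then a else fun=> 1.

Lemma prod_coord k (zs : {ffun 'I_N -> T}) : \prod_j coord k j (zs j) = a (zs k).
Proof.
by rewrite (bigD1 k) //= /coord eqxx [X in _ * X]big1 ?mulr1 // => j /negbTE ->.
Qed.

Lemma prod_sum_coord_off k (g : 'I_N -> T -> R) :
  (forall j, j != k -> g j = coord k j) ->
  \prod_j \sum_x f x * g j x = \sum_x f x * g k x.
Proof.
move=> gE; rewrite (bigD1 k) //= [X in _ * X]big1 ?mulr1 // => j jk.
by rewrite gE // /coord (negbTE jk); under eq_bigr do rewrite mulr1.
Qed.

Lemma iid_expect_coord k : iid_expect (fun zs => a (zs k)) = M1.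
Proof.
rewrite -(funext (prod_coord k)) iid_expect_prod.
by rewrite (@prod_sum_coord_off k) // /coord eqxx.
Qed.

Lemma iid_expect_coord2 k l :
  iid_expect (fun zs => a (zs k) * a (zs l)) = if k == l then M2 else M1 ^+ 2.
Proof.
have -> : (fun zs : {ffun 'I_N -> T} => a (zs k) * a (zs l)) =
    (fun zs : {ffun 'I_N -> T} => \prod_j (coord k j (zs j) * coord l j (zs j))).
  by apply/funext => zs; rewrite big_split /= !prod_coord.
rewrite (iid_expect_prod (fun j x => coord k j x * coord l j x)).
have [<-|nkl] := eqVneq.
  rewrite (@prod_sum_coord_off k (fun j x => coord k j x * coord k j x)).
    by rewrite /coord eqxx; under eq_bigr do rewrite -expr2.
  by move=> j /negbTE jk; rewrite /coord jk; apply/funext => x; rewrite mulr1.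
rewrite (bigD1 k) // (bigD1 l) 1?eq_sym //= [X in _ * (_ * X)]big1 ?mulr1.
  rewrite /coord !eqxx (negbTE nkl) eq_sym (negbTE nkl) expr2.
  by congr (_ * _); apply: eq_bigr => x _; rewrite ?mulr1 ?mul1r.
move=> j /andP[/negbTE jk /negbTE jl]; rewrite /coord jk jl.
by under eq_bigr do rewrite !mulr1.
Qed.

Lemma iid_mean_variance : (0 < N)%N ->
  iid_expect (fun zs => (N%:R^-1 * \sum_j a (zs j)) ^+ 2)
  - (iid_expect (fun zs => N%:R^-1 * \sum_j a (zs j))) ^+ 2
  = N%:R^-1 * (M2 - M1 ^+ 2).
Proof.
move=> N_gt0.
have N0 : (N%:R : R) != 0 by rewrite pnatr_eq0 -lt0n.
have mean : iid_expect (fun zs => N%:R^-1 * \sum_j a (zs j)) = M1.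
  rewrite iid_expectZ iid_expect_sum.
  under eq_bigr do rewrite iid_expect_coord.
  by rewrite sumr_const card_ord -[M1 *+ N]mulr_natl mulKf.
have diag (k : 'I_N) :
    \sum_l (if k == l then M2 else M1 ^+ 2) = N%:R * M1 ^+ 2 + (M2 - M1 ^+ 2).
  rewrite (eq_bigr (fun l => M1 ^+ 2 + (if l == k then M2 - M1 ^+ 2 else 0))).
    by rewrite big_split sumr_const card_ord -big_mkcond big_pred1_eq mulr_natl.
  by move=> l _; rewrite eq_sym; case: ifP => _; rewrite ?addr0 // addrC subrK.
have square : iid_expect (fun zs => (N%:R^-1 * \sum_j a (zs j)) ^+ 2)
    = N%:R^-1 ^+ 2 * (N%:R * (N%:R * M1 ^+ 2 + (M2 - M1 ^+ 2))).
  have -> : (fun zs : {ffun 'I_N -> T} => (N%:R^-1 * \sum_j a (zs j)) ^+ 2) =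
      (fun zs => N%:R^-1 ^+ 2 * \sum_k \sum_l a (zs k) * a (zs l)).
    apply/funext => zs; rewrite exprMn; congr (_ * _).
    by rewrite expr2 mulr_suml; under eq_bigr do rewrite mulr_sumr.
  rewrite iid_expectZ iid_expect_sum.
  under eq_bigr do rewrite iid_expect_sum.
  under eq_bigr do under eq_bigr do rewrite iid_expect_coord2.
  rewrite (eq_bigr _ (fun k _ => diag k)) sumr_const card_ord.
  by congr (_ * _); exact/esym/mulr_natl.
by rewrite square mean; field.
Qed.
End IIDSample.

Section BinarySymmetricChannel.
Context {R : realType} {n : nat}.

Lemma wt_le (z : word n) : (wt z <= n)%N.
Proof. by rewrite /wt -[leqRHS](card_ord n) max_card. Qed.

Lemma pmf_word_prod (q : R) (z : word n) :
  pmf_word q z = \prod_(i < n) (if z i then q else 1 - q).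
Proof.
rewrite (bigID (fun i => z i)) /= (eq_bigr (fun _ => q)) => [|i ->] //.
rewrite [X in _ * X](eq_bigr (fun _ => 1 - q)) => [|i /negbTE ->] //.
rewrite !prodr_const /pmf_word /wt; congr (_ * _ ^+ _).
apply/eqP; rewrite -(eqn_add2l #|[pred i | z i]|) subnKC ?wt_le //.
by rewrite cardC card_ord.
Qed.

Lemma pmf_word_sum1 (q : R) : \sum_(z : word n) pmf_word q z = 1.
Proof.
under eq_bigr do rewrite pmf_word_prod.
rewrite -(bigA_distr_bigA (fun (i : 'I_n) b => if b then q else 1 - q)) /=.
by apply: big1 => i _; rewrite big_bool /= addrC subrK.
Qed.

Variable p : R.

Lemma pmf_word_W (q : R) (z : word n) : q != 0 -> 1 - q != 0 ->
  pmf_word q z * W n (wt z) p q = pmf_word p z.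
Proof.
move=> q0 q1; rewrite /W /pmf_word mulrC divfK //.
by rewrite mulf_neq0 // expf_neq0.
Qed.

Variable I : word n -> bool.

Lemma sum_Ppe_W (q : R) : q != 0 -> 1 - q != 0 ->
  \sum_(z : word n) pmf_word q z * ((I z)%:R * W n (wt z) p q) ^+ 2 =
  \sum_(i < n.+1) Ppe I p i * W n i p q.
Proof.
move=> q0 q1.
rewrite (partition_big (fun z : word n => (inord (wt z) : 'I_n.+1)) predT) //=.
apply: eq_bigr => i _; rewrite /Ppe mulr_suml.
apply: eq_big => [z|z /eqP <-].
  by rewrite -val_eqE /= inordK // ltnS wt_le.
rewrite inordK ?ltnS ?wt_le // -/(pmf_word p z) -(pmf_word_W q z q0 q1).
by case: (I z) => /=; ring.
Qed.

Lemma var_IS_closed_form (N : nat) (q : R) : (0 < N)%N -> q != 0 -> 1 - q != 0 ->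
  var_IS N I p q = N%:R^-1 * (\sum_(i < n.+1) Ppe I p i * W n i p q
                              - (\sum_(z : word n) (I z)%:R * pmf_word p z) ^+ 2).
Proof.
move=> N_gt0 q0 q1.
rewrite -sum_Ppe_W //; have := iid_mean_variance N (pmf_word_sum1 q)
  (fun z => (I z)%:R * W n (wt z) p q) N_gt0.
rewrite /iid_expect /var_IS /pmf_sample /hatP => ->; congr (_ * (_ - _ ^+ 2)).
by apply: eq_bigr => z _; rewrite mulrCA pmf_word_W.
Qed.

Lemma Ppe_eq0 t i : (forall z : word n, (wt z <= t)%N -> I z = false) ->
  (i <= t)%N -> Ppe I p i = 0.
Proof.
by move=> hI le_it; apply: big1 => z /eqP wt_z; rewrite hI ?mul0r // wt_z.
Qed.

Lemma sum_Ppe_from t (F : nat -> R) :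
  (forall z : word n, (wt z <= t)%N -> I z = false) ->
  \sum_(i < n.+1) Ppe I p i * F i = \sum_(t.+1 <= i < n.+1) Ppe I p i * F i.
Proof.
move=> hI; rewrite big_geq_mkord (bigID (fun i : 'I_n.+1 => t < i)%N) /=.
rewrite [X in _ + X]big1 ?addr0 // => i; rewrite -leqNgt => le_it.
by rewrite (Ppe_eq0 _ _ hI le_it) mul0r.
Qed.

End BinarySymmetricChannel.

Theorem lemma2 (R : realType) (n N t : nat) (p : R) (I : word n -> bool)
  (hn : (1 <= n)%N) (hN : (1 <= N)%N) (hp0 : 0 < p) (hp1 : p < 1)
  (ht : (t < n)%N) (hI : forall z : word n, (wt z <= t)%N -> I z = false)
  (q : R) (hq0 : 0 < q) (hq1 : q < 1) :
  is_derive q 1 (fun q' : R => var_IS N I p q')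
    (- (N%:R^-1 * \sum_(t.+1 <= i < n.+1)
          ((i%:R - n%:R * q) / (q * (1 - q))) * W n i p q * Ppe I p i)).
Proof.
set Pe := \sum_(z : word n) (I z)%:R * pmf_word p z.
set S := fun y => \sum_(i < n.+1) Ppe I p i * W n i p y.
set G := N%:R^-1 \*: (S - cst (Pe ^+ 2)).
have closed_form : \forall y \near q, G y = var_IS N I p y.
  near=> y; have : y \in `]0, 1[.
    by near: y; apply: near_in_itvoo; rewrite in_itv /= hq0 hq1.
  rewrite in_itv /= => /andP[y0 y1].
  by rewrite var_IS_closed_form // ?subr_eq0 gt_eqF.
apply: (near_eq_is_derive closed_form).
have q0 : q != 0 by rewrite gt_eqF.
have q1 : 1 - q != 0 by rewrite subr_eq0 gt_eqF.
have dS := is_derive_sum_scaled (fun i : 'I_n.+1 => Ppe I p i)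
  (fun i => is_derive_W n i p q (leq_ord i) q0 q1).
have H := is_deriveZ N%:R^-1 (is_deriveB dS (is_derive_cst (Pe ^+ 2) q 1)).
apply: is_derive_eq H _.
rewrite subr0 (sum_Ppe_from p I t
  (fun i => - ((i%:R - n%:R * q) / (q * (1 - q))) * W n i p q) hI).
rewrite /GRing.scale /= -(mulrN N%:R^-1) -sumrN.
by congr (_ * _); apply: eq_bigr => i _; rewrite mulrC !mulNr.
Unshelve. all: by end_near.
Qed.
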